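(* Let $m\ge 2$, $c\ge 0$, and let $x=((x^1,n_1),\dots,(x^q,n_q))$ (with $q\ge 2$) be a non-convergent Nash equilibrium of the best-worst rule $s=(c,m)$. Then $n_1\ge 2$ and $n_q\ge 2$, and moreover $0<x^1$ and $x^q<1$.
   Context: Setting: voters' ideal points are distributed uniformly (unit mass, Lebesgue measure) on $[0,1]$. There are $m$ candidates; a profile is $x=(x_1,\dots,x_m)\in[0,1]^m$. A voter with ideal point $y$ ranks candidates by distance $|x_i-y|$ (closer is better); ties are broken by a fair lottery (uniformly random strict order among tied candidates). Under the best-worst rule $s=(c,m)$ ($c\ge0$), a candidate receives $1$ point from each voter ranking her first, $-c$ from each voter ranking her last ($m$-th), and $0$ otherwise; $v_i(x)$ is candidate $i$'s expected total points. A (pure-strategy Nash) equilibrium is a profile $x^*$ with $v_i(x^* )\ge v_i(t,x^*_{-i})$ for all $i$ and $t\in[0,1]$ ($(t,x_{-i})$ is $x$ with $x_i$ replaced by $t$); it is non-convergent (NCNE) if at least two platforms are distinct. A profile determines its distinct occupied positions $x^1<\dots<x^q$, with $n_j$ the number of candidates at $x^j$; we write $x=((x^1,n_1),\dots,(x^q,n_q))$. *)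

From Stdlib Require Import Reals Lra List Arith Bool ClassicalEpsilon.
Open Scope R_scope.

(* A profile of m candidates: x : nat -> R, candidate i (i < m) at x i. *)

Definition closest (m : nat) (x : nat -> R) (i : nat) (y : R) : bool :=
  forallb (fun j => if Rle_dec (Rabs (x i - y)) (Rabs (x j - y)) then true else false)
          (seq 0 m).

Definition farthest (m : nat) (x : nat -> R) (i : nat) (y : R) : bool :=
  forallb (fun j => if Rle_dec (Rabs (x j - y)) (Rabs (x i - y)) then true else false)
          (seq 0 m).

Definition nties (m : nat) (x : nat -> R) (i : nat) (y : R) : nat :=
  length (filter (fun j => if Req_EM_T (Rabs (x j - y)) (Rabs (x i - y)) then true else false)
                 (seq 0 m)).

(* Probability (fair lottery among tied candidates) that voter y ranks i first / last. *)
Definition pfirst m x i y : R :=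
  if closest m x i y then / INR (nties m x i y) else 0.
Definition plast m x i y : R :=
  if farthest m x i y then / INR (nties m x i y) else 0.

Definition score (c : R) (m : nat) (x : nat -> R) (i : nat) (y : R) : R :=
  pfirst m x i y - c * plast m x i y.

(* Integral over [0,1] (uniform voter distribution, unit mass).  The value is
   the Riemann integral whenever f is Riemann integrable on [0,1] (which is the
   case for the step functions considered here); RiemannInt is independent of
   the integrability proof. *)
Definition integral01 (f : R -> R) : R :=
  epsilon (inhabits 0)
    (fun V => exists pr : Riemann_integrable f 0 1, RiemannInt pr = V).

Definition payoff (c : R) (m : nat) (x : nat -> R) (i : nat) : R :=
  integral01 (score c m x i).

Definition upd (x : nat -> R) (i : nat) (t : R) : nat -> R :=
  fun j => if Nat.eq_dec j i then t else x j.

Definition is_profile (m : nat) (x : nat -> R) : Prop :=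
  forall i, (i < m)%nat -> 0 <= x i <= 1.

Definition nash_eq (c : R) (m : nat) (x : nat -> R) : Prop :=
  is_profile m x /\
  forall i, (i < m)%nat -> forall t, 0 <= t <= 1 ->
    payoff c m x i >= payoff c m (upd x i t) i.

(* non-convergent: at least two distinct platforms (q >= 2) *)
Definition ncne (c : R) (m : nat) (x : nat -> R) : Prop :=
  nash_eq c m x /\ exists i j, (i < m)%nat /\ (j < m)%nat /\ x i <> x j.

(* A candidate on the leftmost platform a has a profitable deviation unless she
   shares it with another candidate and a > 0.  Let b be the next platform.  Alone
   at a, she moves to (a + b)/2: no voter's score for her drops (voters left of a
   still rank her alone first), while the voters just right of (a + b)/2 switch
   from a score <= 0 to a score of 1.  Sharing a = 0, she gets at most 1/2 from
   each voter near 0, so moving to b/2 loses at most 1/2 on (0, b/4) but gains 1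
   on (b/2, 3b/4).  The rightmost platform is the leftmost one of the profile
   reflected by y |-> 1 - y, which is again an equilibrium. *)

From Stdlib Require Import Reals Lra Lia List Classical ClassicalEpsilon
  FunctionalExtensionality.
From Coquelicot Require Import Coquelicot.
Open Scope R_scope.

(** * Riemann integrals *)

Lemma integral01_RInt (f : R -> R) : ex_RInt f 0 1 -> integral01 f = RInt f 0 1.
Proof.
  intros Hf. unfold integral01.
  destruct (epsilon_spec (inhabits 0)
    (fun V => exists pr : Riemann_integrable f 0 1, RiemannInt pr = V)) as [pr <-].
  - exists (RInt f 0 1), (ex_RInt_Reals_0 f 0 1 Hf). symmetry; apply RInt_Reals.
  - symmetry; apply RInt_Reals.
Qed.

Lemma ex_RInt_piecewise_constant (f : R -> R) (L : list R) : forall a b, a <= b ->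
  (forall y z, a < y -> y < z -> z < b -> (forall p, In p L -> ~ y <= p <= z) ->
     f y = f z) ->
  ex_RInt f a b.
Proof.
  induction L as [|p L IH]; intros a b Hab Hf.
  - apply (ex_RInt_ext (fun _ => f ((a + b) / 2))); [|apply ex_RInt_const].
    rewrite Rmin_left, Rmax_right by lra. intros y Hy.
    destruct (Rtotal_order y ((a + b) / 2)) as [h|[->|h]]; [| reflexivity |].
    + symmetry; apply Hf; try lra; intros p [].
    + apply Hf; try lra; intros p [].
  - assert (Hsub : forall u v, a <= u -> u <= v -> v <= b -> (v <= p \/ p <= u) ->
                  ex_RInt f u v).
    { intros u v Hau Huv Hvb Hp. apply IH; [lra|]. intros y z Hy Hyz Hz Hn.
      apply Hf; try lra. intros q [<-|Hq]; [destruct Hp; lra | now apply Hn]. }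
    destruct (Rlt_dec a p); [destruct (Rlt_dec p b)|].
    + apply (ex_RInt_Chasles f a p b); apply Hsub; lra.
    + apply Hsub; lra.
    + apply Hsub; lra.
Qed.

Lemma RInt_ge_const (f : R -> R) (a b k : R) : a <= b -> ex_RInt f a b ->
  (forall y, a < y < b -> k <= f y) -> k * (b - a) <= RInt f a b.
Proof.
  intros Hab Hf Hk.
  replace (k * (b - a)) with (RInt (fun _ => k) a b)
    by (rewrite RInt_const; unfold scal; simpl; unfold mult; simpl; ring).
  apply RInt_le; auto. apply ex_RInt_const.
Qed.

Lemma RInt_pos_of_two_pieces (d : R -> R) (p1 p2 p3 p4 k1 k2 : R) :
  0 <= p1 <= p2 -> p2 <= p3 <= p4 -> p4 <= 1 -> ex_RInt d 0 1 ->
  (forall y, p1 < y < p2 -> k1 <= d y) ->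
  (forall y, p3 < y < p4 -> k2 <= d y) ->
  (forall y, 0 < y < 1 -> ~ p1 < y < p2 -> ~ p3 < y < p4 -> 0 <= d y) ->
  0 < k1 * (p2 - p1) + k2 * (p4 - p3) ->
  0 < RInt d 0 1.
Proof.
  intros H12 H34 H4 Hd G1 G2 G0 Hpos.
  assert (Hsub : forall u v, 0 <= u <= v -> v <= 1 -> ex_RInt d u v).
  { intros u v Huv Hv. apply (ex_RInt_Chasles_2 d 0 u v); [lra|].
    apply (ex_RInt_Chasles_1 d 0 v 1); [lra|exact Hd]. }
  assert (Hsplit : forall u v w, 0 <= u <= v -> v <= w <= 1 ->
            RInt d u w = RInt d u v + RInt d v w).
  { intros u v w Huv Hvw. symmetry; apply (RInt_Chasles d u v w); apply Hsub; lra. }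
  assert (Hpiece : forall u v k, 0 <= u <= v -> v <= 1 ->
            (forall y, u < y < v -> k <= d y) -> k * (v - u) <= RInt d u v).
  { intros u v k Huv Hv Hk. apply RInt_ge_const; [lra | apply Hsub; lra | exact Hk]. }
  rewrite (Hsplit 0 p1 1), (Hsplit p1 p2 1), (Hsplit p2 p3 1), (Hsplit p3 p4 1) by lra.
  pose proof (Hpiece 0 p1 0 ltac:(lra) ltac:(lra) ltac:(intros; apply G0; lra)).
  pose proof (Hpiece p1 p2 k1 ltac:(lra) ltac:(lra) G1).
  pose proof (Hpiece p2 p3 0 ltac:(lra) ltac:(lra) ltac:(intros; apply G0; lra)).
  pose proof (Hpiece p3 p4 k2 ltac:(lra) ltac:(lra) G2).
  pose proof (Hpiece p4 1 0 ltac:(lra) ltac:(lra) ltac:(intros; apply G0; lra)).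
  lra.
Qed.

Lemma RInt_reflect01 (f : R -> R) : ex_RInt f 0 1 ->
  RInt (fun y => f (1 - y)) 0 1 = RInt f 0 1.
Proof.
  intros Hf.
  assert (Hf' : ex_RInt f (-1 * 0 + 1) (-1 * 1 + 1)).
  { replace (-1 * 0 + 1) with 1 by ring. replace (-1 * 1 + 1) with 0 by ring.
    now apply ex_RInt_swap. }
  rewrite <- (opp_RInt_swap f 1 0) by now apply ex_RInt_swap.
  replace (RInt f 1 0) with (RInt f (-1 * 0 + 1) (-1 * 1 + 1)) by (f_equal; ring).
  rewrite <- (RInt_comp_lin f _ _ _ _ Hf').
  (* Without the explicit [V], unifying [opp] makes this rewrite diverge. *)
  rewrite <- (RInt_opp (V := R_CompleteNormedModule) (fun y => scal (-1) (f (-1 * y + 1))))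
    by exact (ex_RInt_comp_lin f (-1) 1 0 1 Hf').
  apply RInt_ext; intros y _. unfold scal, opp; simpl; unfold mult; simpl.
  replace (-1 * y + 1) with (1 - y) by ring. ring.
Qed.

(** * Ranking probabilities and scores *)

Lemma closest_spec m x i y : closest m x i y = true <->
  forall j, (j < m)%nat -> Rabs (x i - y) <= Rabs (x j - y).
Proof.
  unfold closest; rewrite forallb_forall; split; intros H j Hj.
  - specialize (H j (proj2 (in_seq m 0 j) ltac:(lia))).
    destruct (Rle_dec _ _); [assumption | discriminate].
  - apply in_seq in Hj. destruct (Rle_dec _ _) as [_|n]; [reflexivity|].
    exfalso; apply n, H; lia.
Qed.

Lemma farthest_spec m x i y : farthest m x i y = true <->
  forall j, (j < m)%nat -> Rabs (x j - y) <= Rabs (x i - y).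
Proof.
  unfold farthest; rewrite forallb_forall; split; intros H j Hj.
  - specialize (H j (proj2 (in_seq m 0 j) ltac:(lia))).
    destruct (Rle_dec _ _); [assumption | discriminate].
  - apply in_seq in Hj. destruct (Rle_dec _ _) as [_|n]; [reflexivity|].
    exfalso; apply n, H; lia.
Qed.

Lemma nties_ge_length m x i y (l : list nat) : NoDup l ->
  (forall j, In j l -> (j < m)%nat /\ Rabs (x j - y) = Rabs (x i - y)) ->
  (length l <= nties m x i y)%nat.
Proof.
  intros Hl Hin. apply NoDup_incl_length; [exact Hl|]. intros j Hj.
  destruct (Hin j Hj) as [Hjm Heq]. apply filter_In. split.
  - apply in_seq; lia.
  - destruct (Req_EM_T _ _); [reflexivity | contradiction].
Qed.

Lemma nties_pos m x i y : (i < m)%nat -> (1 <= nties m x i y)%nat.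
Proof.
  intros Hi. apply (nties_ge_length m x i y (i :: nil)).
  - repeat constructor; intros [].
  - intros j [<-|[]]; auto.
Qed.

Lemma nties_ge_2 m x i j y : (i < m)%nat -> (j < m)%nat -> j <> i -> x j = x i ->
  (2 <= nties m x i y)%nat.
Proof.
  intros Hi Hj Hji Hx. apply (nties_ge_length m x i y (i :: j :: nil)).
  - repeat constructor; simpl; intuition.
  - intros k [<-|[<-|[]]]; [|rewrite Hx]; auto.
Qed.

Lemma nties_le_1 m x i y :
  (forall j, (j < m)%nat -> j <> i -> Rabs (x j - y) <> Rabs (x i - y)) ->
  (nties m x i y <= 1)%nat.
Proof.
  intros H. unfold nties.
  set (l := filter _ _).
  assert (Hl : NoDup l) by apply NoDup_filter, seq_NoDup.
  assert (Hi : forall j, In j l -> j = i).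
  { intros j Hj. apply filter_In in Hj as [Hj Heq]. apply in_seq in Hj.
    destruct (Nat.eq_dec j i) as [|Hji]; [assumption|].
    destruct (Req_EM_T _ _); [exfalso; apply (H j); auto; lia | discriminate]. }
  destruct l as [|a [|b l']]; simpl; try lia.
  inversion Hl as [|? ? Hnot]; subst. exfalso; apply Hnot.
  rewrite (Hi a), (Hi b); simpl; auto.
Qed.

Lemma inv_nties_bounds m x i y : (i < m)%nat -> 0 < / INR (nties m x i y) <= 1.
Proof.
  intros Hi. pose proof (le_INR _ _ (nties_pos m x i y Hi)) as H; simpl in H.
  split; [apply Rinv_0_lt_compat; lra|].
  rewrite <- Rinv_1; apply Rinv_le_contravar; lra.
Qed.

Lemma inv_nties_unique m x i y : (i < m)%nat ->
  (forall j, (j < m)%nat -> j <> i -> Rabs (x j - y) <> Rabs (x i - y)) ->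
  / INR (nties m x i y) = 1.
Proof.
  intros Hi H.
  replace (nties m x i y) with 1%nat by (pose proof (nties_pos m x i y Hi);
    pose proof (nties_le_1 m x i y H); lia).
  apply Rinv_1.
Qed.

Lemma pfirst_bounds m x i y : (i < m)%nat -> 0 <= pfirst m x i y <= 1.
Proof.
  intros Hi; unfold pfirst; pose proof (inv_nties_bounds m x i y Hi).
  destruct (closest _ _ _ _); lra.
Qed.

Lemma plast_bounds m x i y : (i < m)%nat -> 0 <= plast m x i y <= 1.
Proof.
  intros Hi; unfold plast; pose proof (inv_nties_bounds m x i y Hi).
  destruct (farthest _ _ _ _); lra.
Qed.

Lemma pfirst_eq_1 m x i y : (i < m)%nat ->
  (forall j, (j < m)%nat -> j <> i -> Rabs (x i - y) < Rabs (x j - y)) ->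
  pfirst m x i y = 1.
Proof.
  intros Hi H. unfold pfirst.
  replace (closest m x i y) with true.
  - apply inv_nties_unique; [exact Hi|]. intros j Hj Hji. specialize (H j Hj Hji); lra.
  - symmetry; apply closest_spec. intros j Hj.
    destruct (Nat.eq_dec j i) as [->|Hji]; [lra | left; auto].
Qed.

Lemma plast_eq_1 m x i y : (i < m)%nat ->
  (forall j, (j < m)%nat -> j <> i -> Rabs (x j - y) < Rabs (x i - y)) ->
  plast m x i y = 1.
Proof.
  intros Hi H. unfold plast.
  replace (farthest m x i y) with true.
  - apply inv_nties_unique; [exact Hi|]. intros j Hj Hji. specialize (H j Hj Hji); lra.
  - symmetry; apply farthest_spec. intros j Hj.
    destruct (Nat.eq_dec j i) as [->|Hji]; [lra | left; auto].
Qed.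

Lemma pfirst_eq_0 m x i j y : (j < m)%nat -> Rabs (x j - y) < Rabs (x i - y) ->
  pfirst m x i y = 0.
Proof.
  intros Hj H. unfold pfirst. destruct (closest m x i y) eqn:E; [|reflexivity].
  exfalso. pose proof (proj1 (closest_spec m x i y) E j Hj). lra.
Qed.

Lemma plast_eq_0 m x i j y : (j < m)%nat -> Rabs (x i - y) < Rabs (x j - y) ->
  plast m x i y = 0.
Proof.
  intros Hj H. unfold plast. destruct (farthest m x i y) eqn:E; [|reflexivity].
  exfalso. pose proof (proj1 (farthest_spec m x i y) E j Hj). lra.
Qed.

Lemma pfirst_le_half m x i j y : (i < m)%nat -> (j < m)%nat -> j <> i -> x j = x i ->
  pfirst m x i y <= / 2.
Proof.
  intros Hi Hj Hji Hx. unfold pfirst. destruct (closest _ _ _ _); [|lra].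
  pose proof (le_INR _ _ (nties_ge_2 m x i j y Hi Hj Hji Hx)) as K; simpl in K.
  apply Rinv_le_contravar; lra.
Qed.

Lemma score_compat c m x x' i y y' : (i < m)%nat ->
  (forall j k, (j < m)%nat -> (k < m)%nat ->
     Rabs (x j - y) <= Rabs (x k - y) <-> Rabs (x' j - y') <= Rabs (x' k - y')) ->
  score c m x i y = score c m x' i y'.
Proof.
  intros Hi Hcmp.
  assert (Hcl : closest m x i y = closest m x' i y').
  { apply Bool.eq_true_iff_eq. rewrite !closest_spec.
    split; intros H j Hj; apply Hcmp; auto. }
  assert (Hfa : farthest m x i y = farthest m x' i y').
  { apply Bool.eq_true_iff_eq. rewrite !farthest_spec.
    split; intros H j Hj; apply Hcmp; auto. }
  assert (Hnt : nties m x i y = nties m x' i y').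
  { unfold nties; f_equal; apply filter_ext_in; intros j Hj; apply in_seq in Hj.
    destruct (Hcmp j i ltac:(lia) Hi), (Hcmp i j Hi ltac:(lia)).
    do 2 destruct (Req_EM_T _ _); try reflexivity; exfalso; intuition lra. }
  unfold score, pfirst, plast. now rewrite Hcl, Hfa, Hnt.
Qed.

Lemma upd_same x i t : upd x i t i = t.
Proof. unfold upd; destruct (Nat.eq_dec i i); congruence. Qed.

Lemma upd_other x i t j : j <> i -> upd x i t j = x j.
Proof. unfold upd; destruct (Nat.eq_dec j i); congruence. Qed.

Lemma score_le_upd_closer c m x i t y : 0 <= c -> (i < m)%nat ->
  Rabs (t - y) <= Rabs (x i - y) -> score c m x i y <= score c m (upd x i t) i y.
Proof.
  intros Hc Hi [Hlt|Heq].
  2:{ right. apply score_compat; [exact Hi|]. intros j k _ _.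
      destruct (Nat.eq_dec j i) as [->|Hj], (Nat.eq_dec k i) as [->|Hk];
        rewrite ?upd_same, ?upd_other by assumption; rewrite ?Heq; reflexivity. }
  (* If i was closest she becomes the unique closest,
     and if she is farthest after the move she was the unique farthest before. *)
  set (x' := upd x i t).
  assert (Pf : pfirst m x i y <= pfirst m x' i y).
  { destruct (closest m x i y) eqn:E.
    - rewrite (pfirst_eq_1 m x' i y Hi); [apply pfirst_bounds; exact Hi|].
      intros j Hj Hji. unfold x'; rewrite upd_same, upd_other by exact Hji.
      pose proof (proj1 (closest_spec m x i y) E j Hj). lra.
    - unfold pfirst at 1; rewrite E. apply pfirst_bounds; exact Hi. }
  assert (Pl : plast m x' i y <= plast m x i y).
  { destruct (farthest m x' i y) eqn:E.
    - rewrite (plast_eq_1 m x i y Hi); [apply plast_bounds; exact Hi|].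
      intros j Hj Hji. pose proof (proj1 (farthest_spec m x' i y) E j Hj) as Hfar.
      unfold x' in Hfar; rewrite upd_same, upd_other in Hfar by exact Hji. lra.
    - unfold plast at 1; rewrite E. apply plast_bounds; exact Hi. }
  unfold score. pose proof (Rmult_le_compat_l c _ _ Hc Pl). lra.
Qed.

Lemma score_eq_1 c m x i j y : (i < m)%nat -> (j < m)%nat -> j <> i ->
  (forall k, (k < m)%nat -> k <> i -> Rabs (x i - y) < Rabs (x k - y)) ->
  score c m x i y = 1.
Proof.
  intros Hi Hj Hji H. unfold score.
  rewrite (pfirst_eq_1 m x i y Hi H), (plast_eq_0 m x i j y Hj (H j Hj Hji)). ring.
Qed.

Lemma score_nonpos_of_closer c m x i j y : 0 <= c -> (i < m)%nat -> (j < m)%nat ->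
  Rabs (x j - y) < Rabs (x i - y) -> score c m x i y <= 0.
Proof.
  intros Hc Hi Hj H. unfold score. rewrite (pfirst_eq_0 m x i j y Hj H).
  pose proof (Rmult_le_pos c _ Hc (proj1 (plast_bounds m x i y Hi))). lra.
Qed.

Lemma score_nonneg_of_farther c m x i j y : (i < m)%nat -> (j < m)%nat ->
  Rabs (x i - y) < Rabs (x j - y) -> 0 <= score c m x i y.
Proof.
  intros Hi Hj H. unfold score. rewrite (plast_eq_0 m x i j y Hj H).
  pose proof (pfirst_bounds m x i y Hi). lra.
Qed.

Lemma score_le_half_of_twin c m x i j y : 0 <= c -> (i < m)%nat -> (j < m)%nat ->
  j <> i -> x j = x i -> score c m x i y <= / 2.
Proof.
  intros Hc Hi Hj Hji Hx. unfold score.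
  pose proof (pfirst_le_half m x i j y Hi Hj Hji Hx).
  pose proof (Rmult_le_pos c _ Hc (proj1 (plast_bounds m x i y Hi))). lra.
Qed.

(** * Payoffs *)

Ltac solve_Rabs := unfold Rabs in *; repeat destruct Rcase_abs; lra.

Lemma Rabs_le_iff_no_midpoint u v y z : y < z -> ~ y <= (u + v) / 2 <= z ->
  Rabs (u - y) <= Rabs (v - y) <-> Rabs (u - z) <= Rabs (v - z).
Proof.
  intros Hyz Hn.
  destruct (Rle_lt_dec z ((u + v) / 2)); [|destruct (Rlt_le_dec y ((u + v) / 2))];
    [| exfalso; lra |]; split; intro; solve_Rabs.
Qed.

Definition midpoints (m : nat) (x : nat -> R) : list R :=
  flat_map (fun j => map (fun k => (x j + x k) / 2) (seq 0 m)) (seq 0 m).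

Lemma in_midpoints m x j k : (j < m)%nat -> (k < m)%nat ->
  In ((x j + x k) / 2) (midpoints m x).
Proof.
  intros Hj Hk. apply in_flat_map. exists j; split; [apply in_seq; lia|].
  apply (in_map (fun k => (x j + x k) / 2)), in_seq; lia.
Qed.

Lemma score_const_between_midpoints c m x i y z : (i < m)%nat -> y < z ->
  (forall p, In p (midpoints m x) -> ~ y <= p <= z) ->
  score c m x i y = score c m x i z.
Proof.
  intros Hi Hyz Hn. apply score_compat; [exact Hi|]. intros j k Hj Hk.
  apply Rabs_le_iff_no_midpoint; [exact Hyz|]. apply Hn, in_midpoints; assumption.
Qed.

Lemma ex_RInt_score c m x i a b : (i < m)%nat -> ex_RInt (score c m x i) a b.
Proof.
  intros Hi.
  assert (H : forall u v, u <= v -> ex_RInt (score c m x i) u v).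
  { intros u v Huv. apply (ex_RInt_piecewise_constant _ (midpoints m x)); [exact Huv|].
    intros y z _ Hyz _. apply score_const_between_midpoints; assumption. }
  destruct (Rle_dec a b); [apply H; lra | apply ex_RInt_swap, H; lra].
Qed.

Lemma payoff_RInt c m x i : (i < m)%nat -> payoff c m x i = RInt (score c m x i) 0 1.
Proof. intros Hi. apply integral01_RInt, ex_RInt_score, Hi. Qed.

Lemma payoff_lt_of_gain c m x x' i p1 p2 p3 p4 k1 k2 : (i < m)%nat ->
  0 <= p1 <= p2 -> p2 <= p3 <= p4 -> p4 <= 1 ->
  0 < k1 * (p2 - p1) + k2 * (p4 - p3) ->
  (forall y, p1 < y < p2 -> k1 <= score c m x' i y - score c m x i y) ->
  (forall y, p3 < y < p4 -> k2 <= score c m x' i y - score c m x i y) ->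
  (forall y, 0 < y < 1 -> ~ p1 < y < p2 -> ~ p3 < y < p4 ->
     score c m x i y <= score c m x' i y) ->
  payoff c m x i < payoff c m x' i.
Proof.
  intros Hi H12 H34 H4 Hpos G1 G2 G0.
  rewrite !payoff_RInt by exact Hi.
  assert (Hd := RInt_pos_of_two_pieces (fun y => score c m x' i y - score c m x i y)
    p1 p2 p3 p4 k1 k2 H12 H34 H4
    (ex_RInt_minus _ _ 0 1 (ex_RInt_score c m x' i 0 1 Hi) (ex_RInt_score c m x i 0 1 Hi))
    G1 G2 ltac:(intros y Hy n1 n2; specialize (G0 y Hy n1 n2); lra) Hpos).
  rewrite (RInt_minus (V := R_CompleteNormedModule)) in Hd
    by apply ex_RInt_score, Hi.
  unfold minus, plus, opp in Hd; simpl in Hd. lra.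
Qed.

Definition reflect (x : nat -> R) : nat -> R := fun j => 1 - x j.

Lemma score_reflect c m x i y : (i < m)%nat ->
  score c m (reflect x) i y = score c m x i (1 - y).
Proof.
  intros Hi. apply score_compat; [exact Hi|]. intros j k _ _. unfold reflect.
  replace (1 - x j - y) with (- (x j - (1 - y))) by ring.
  replace (1 - x k - y) with (- (x k - (1 - y))) by ring.
  rewrite !Rabs_Ropp. reflexivity.
Qed.

Lemma payoff_reflect c m x i : (i < m)%nat -> payoff c m (reflect x) i = payoff c m x i.
Proof.
  intros Hi. rewrite !payoff_RInt by exact Hi.
  rewrite <- RInt_reflect01 by apply ex_RInt_score, Hi.
  apply RInt_ext; intros y _. rewrite score_reflect by exact Hi. f_equal; ring.
Qed.

Lemma upd_reflect x i t : upd (reflect x) i t = reflect (upd x i (1 - t)).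
Proof.
  apply functional_extensionality; intros j. unfold upd, reflect.
  destruct (Nat.eq_dec j i); ring.
Qed.

Lemma ncne_reflect c m x : ncne c m x -> ncne c m (reflect x).
Proof.
  intros [[Hp Hn] [i [j [Hi [Hj Hij]]]]]. split; [split|].
  - intros k Hk. specialize (Hp k Hk). unfold reflect; lra.
  - intros k Hk t Ht. rewrite upd_reflect, !payoff_reflect by exact Hk.
    apply Hn; [exact Hk | lra].
  - exists i, j; repeat split; auto. unfold reflect; intro; lra.
Qed.

(** * Deviations from the leftmost platform *)

Section LeftmostDeviation.

Variables (c : R) (m : nat) (x : nat -> R) (i j0 : nat).
Hypotheses (Hc : 0 <= c) (Hprof : is_profile m x) (Hi : (i < m)%nat)
  (Hj0 : (j0 < m)%nat) (Hij0 : x i < x j0).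

Lemma leftmost_alone_deviation :
  (forall j, (j < m)%nat -> j <> i -> x j0 <= x j) ->
  payoff c m x i < payoff c m (upd x i ((x i + x j0) / 2)) i.
Proof.
  intros Hright.
  assert (Hji : j0 <> i) by (intros ->; lra).
  pose proof (Hprof i Hi). pose proof (Hprof j0 Hj0).
  set (a := x i) in *. set (b := x j0) in *. set (t := (a + b) / 2).
  assert (Hnew : forall y, y < (a + 3 * b) / 4 -> score c m (upd x i t) i y = 1).
  { intros y Hy. apply (score_eq_1 c m _ i j0); auto. intros k Hk Hki.
    rewrite upd_same, upd_other by exact Hki. specialize (Hright k Hk Hki).
    unfold t; solve_Rabs. }
  set (q := (a + 3 * b) / 4).
  apply (payoff_lt_of_gain c m x _ i t q q q 1 0 Hi); unfold t, q in *; try lra.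
  - intros y Hy. rewrite Hnew by lra.
    pose proof (score_nonpos_of_closer c m x i j0 y Hc Hi Hj0 ltac:(fold a b; solve_Rabs)).
    lra.
  - intros y Hy; lra.
  - intros y Hy _ _. destruct (Rle_dec ((3 * a + b) / 4) y).
    + apply score_le_upd_closer; auto. fold a; solve_Rabs.
    + rewrite Hnew by lra. right. apply (score_eq_1 c m x i j0); auto.
      intros k Hk Hki. specialize (Hright k Hk Hki). fold a; solve_Rabs.
Qed.

Lemma leftmost_at_zero_deviation j1 : x i = 0 -> (j1 < m)%nat -> j1 <> i -> x j1 = x i ->
  (forall j, (j < m)%nat -> x j = x i \/ x j0 <= x j) ->
  payoff c m x i < payoff c m (upd x i (x j0 / 2)) i.
Proof.
  intros Hzero Hj1 Hj1i Htwin Hright.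
  assert (Hji : j0 <> i) by (intros ->; lra).
  pose proof (Hprof j0 Hj0).
  set (b := x j0) in *.
  apply (payoff_lt_of_gain c m x _ i 0 (b / 4) (b / 2) (3 * b / 4) (-1/2) 1 Hi); try lra.
  - intros y Hy.
    pose proof (score_le_half_of_twin c m x i j1 y Hc Hi Hj1 Hj1i Htwin).
    pose proof (score_nonneg_of_farther c m (upd x i (b / 2)) i j0 y Hi Hj0
      ltac:(rewrite upd_same, upd_other by exact Hji; fold b; solve_Rabs)).
    lra.
  - intros y Hy. rewrite (score_eq_1 c m _ i j0 y Hi Hj0 Hji).
    + pose proof (score_nonpos_of_closer c m x i j0 y Hc Hi Hj0
        ltac:(rewrite Hzero; fold b; solve_Rabs)). lra.
    + intros k Hk Hki. rewrite upd_same, upd_other by exact Hki.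
      destruct (Hright k Hk) as [->|]; [rewrite Hzero|]; solve_Rabs.
  - intros y Hy Hn1 _. apply score_le_upd_closer; auto. rewrite Hzero. solve_Rabs.
Qed.

End LeftmostDeviation.

Lemma exists_nearest_above (x : nat -> R) (a : R) (m : nat) :
  (exists j, (j < m)%nat /\ a < x j) ->
  exists j0, (j0 < m)%nat /\ a < x j0 /\ forall j, (j < m)%nat -> a < x j -> x j0 <= x j.
Proof.
  induction m as [|n IH]; intros [j [Hj Ha]]; [lia|].
  destruct (classic (exists j, (j < n)%nat /\ a < x j)) as [Hex|Hno].
  - destruct (IH Hex) as [j0 [Hj0 [Ha0 Hnear]]].
    destruct (classic (a < x n < x j0)) as [Hn|Hn].
    + exists n; repeat split; [lia | lra|]. intros k Hk Hak.
      destruct (Nat.eq_dec k n) as [->|]; [lra|]. specialize (Hnear k ltac:(lia) Hak); lra.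
    + exists j0; repeat split; [lia | lra|]. intros k Hk Hak.
      destruct (Nat.eq_dec k n) as [->|]; [|apply Hnear; [lia | exact Hak]].
      apply Rnot_lt_le; intros Hlt; apply Hn; lra.
  - exists n; repeat split; [lia| |].
    + destruct (Nat.eq_dec j n) as [<-|]; [exact Ha|].
      exfalso; apply Hno; exists j; split; [lia | exact Ha].
    + intros k Hk Hak. destruct (Nat.eq_dec k n) as [->|]; [lra|].
      exfalso; apply Hno; exists k; split; [lia | exact Hak].
Qed.

Lemma ncne_leftmost c m x i : 0 <= c -> ncne c m x -> (i < m)%nat ->
  (forall j, (j < m)%nat -> x i <= x j) ->
  (exists j, (j < m)%nat /\ j <> i /\ x j = x i) /\ 0 < x i.
Proof.
  intros Hc [[Hprof Hnash] [j1 [j2 [Hj1 [Hj2 Hne]]]]] Hi Hmin.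
  assert (Hstable : forall t, 0 <= t <= 1 -> ~ payoff c m x i < payoff c m (upd x i t) i).
  { intros t Ht Hlt. specialize (Hnash i Hi t Ht). lra. }
  assert (Habove : exists j, (j < m)%nat /\ x i < x j).
  { pose proof (Hmin j1 Hj1). pose proof (Hmin j2 Hj2).
    destruct (Req_dec (x i) (x j1)); [exists j2 | exists j1]; split; auto; lra. }
  destruct (exists_nearest_above x (x i) m Habove) as [j0 [Hj0 [Hij0 Hnear]]].
  pose proof (Hprof i Hi). pose proof (Hprof j0 Hj0).
  assert (Hright : forall j, (j < m)%nat -> x j = x i \/ x j0 <= x j).
  { intros j Hj. pose proof (Hmin j Hj).
    destruct (Req_dec (x j) (x i)); [left | right; apply Hnear]; auto; lra. }
  destruct (classic (exists j, (j < m)%nat /\ j <> i /\ x j = x i))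
    as [[j [Hj [Hji Htwin]]] | Hlone].
  - split; [exists j; auto|].
    destruct (Rle_lt_or_eq_dec 0 (x i) ltac:(lra)) as [Hpos|Hzero]; [exact Hpos | exfalso].
    apply (Hstable (x j0 / 2)); [lra|].
    now apply (leftmost_at_zero_deviation c m x i j0 Hc Hprof Hi Hj0 Hij0 j).
  - exfalso. apply (Hstable ((x i + x j0) / 2)); [lra|].
    apply leftmost_alone_deviation; auto. intros k Hk Hki.
    destruct (Hright k Hk) as [Htwin|]; [exfalso; apply Hlone; exists k; auto | assumption].
Qed.

Theorem lemma1 (m : nat) (c : R) (x : nat -> R) :
  (2 <= m)%nat -> 0 <= c -> ncne c m x ->
  (forall i, (i < m)%nat -> (forall j, (j < m)%nat -> x i <= x j) ->
     (exists j, (j < m)%nat /\ j <> i /\ x j = x i) /\ 0 < x i) /\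
  (forall i, (i < m)%nat -> (forall j, (j < m)%nat -> x j <= x i) ->
     (exists j, (j < m)%nat /\ j <> i /\ x j = x i) /\ x i < 1).
Proof.
  intros _ Hc Hx. split; intros i Hi Hext.
  - now apply (ncne_leftmost c m x i).
  - destruct (ncne_leftmost c m (reflect x) i Hc (ncne_reflect c m x Hx) Hi)
      as [[j [Hj [Hji Htwin]]] Hpos].
    { intros j Hj. specialize (Hext j Hj). unfold reflect; lra. }
    unfold reflect in *. split; [exists j; repeat split; auto; lra | lra].
Qed.
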